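(* There exists a symmetric Stackelberg singleton congestion game (SSSCG) that admits no pessimistic Stackelberg equilibrium. In particular, this holds for the SSSCG with one follower, resources $R=\{r_1,r_2\}$, and costs $c_{r_1,\ell}(1)=2$, $c_{r_1,\ell}(2)=0$, $c_{r_1,f}(1)=1$, $c_{r_1,f}(2)=2$, $c_{r_2,\ell}(1)=2$, $c_{r_2,\ell}(2)=2$, $c_{r_2,f}(1)=1$, $c_{r_2,f}(2)=2$: there, $\inf_{\sigma_\ell}\max_{a\in E^{\sigma_\ell}}c_\ell^{(\sigma_\ell,a)}=1$, but this infimum is not attained.
   Context: A Stackelberg singleton congestion game (SSCG) is a tuple $(N,R,A,c_\ell,c_f)$ where $N=F\cup\{\ell\}$ is a finite set of players ($\ell$ is the leader, $F$ the set of followers), $R$ is a finite set of resources, $A=\{A_p\}_{p\in N}$ with $\emptyset\ne A_p\subseteq R$ the set of resources player $p$ may select (each player selects exactly one resource), and $c_\ell=\{c_{i,\ell}\}_{i\in R}$, $c_f=\{c_{i,f}\}_{i\in R}$ are the leader's and the followers' cost functions $c_{i,\ell},c_{i,f}:\mathbb N\to\mathbb Q$ (the same $c_{i,f}$ for all followers), with $c_{i,\ell}(0)=c_{i,f}(0)=0$. Let $n=|N|$, $r=|R|$. The leader commits to a (possibly mixed) strategy $\sigma_\ell$, a probability distribution on $A_\ell$ (set $\sigma_\ell(i)=0$ for $i\notin A_\ell$); it is pure if it puts probability $1$ on a single resource. The followers play a pure profile $a=(a_p)_{p\in F}$, $a_p\in A_p$; let $\nu^a_i=|\{p\in F:a_p=i\}|$.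 The followers' expected cost of resource $i$ when $x$ followers use it is $c^{\sigma_\ell}_{i,f}(x)=\sigma_\ell(i)c_{i,f}(x+1)+(1-\sigma_\ell(i))c_{i,f}(x)$. The leader's cost is $c_\ell^{(\sigma_\ell,a)}=\sum_{i\in A_\ell}\sigma_\ell(i)\,c_{i,\ell}(\nu^a_i+1)$. The profile $a$ is a Nash equilibrium (NE) for $\sigma_\ell$, written $a\in E^{\sigma_\ell}$, if for every $p\in F$ and every $a'_p\in A_p\setminus\{a_p\}$, $c^{\sigma_\ell}_{a_p,f}(\nu^a_{a_p})\le c^{\sigma_\ell}_{a'_p,f}(\nu^a_{a'_p}+1)$. A pessimistic Stackelberg equilibrium (PSE) is a pair $(\sigma_\ell,a)$ such that $\sigma_\ell$ attains the minimum over all leader strategies of $\max_{a'\in E^{\sigma_\ell}}c_\ell^{(\sigma_\ell,a')}$ and $a\in E^{\sigma_\ell}$ attains that maximum. An SSCG is symmetric (SSSCG) if $A_p=R$ for all $p\in N$. *)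

From HB Require Import structures.
From mathcomp Require Import all_boot all_order all_algebra.
Set Implicit Arguments. Unset Strict Implicit. Unset Printing Implicit Defensive.
Import Order.TTheory GRing.Theory Num.Theory.
Local Open Scope ring_scope.

Record sscg := SSCG {
  follower : finType;
  resource : finType;
  Af : follower -> {set resource};
  Al : {set resource};
  cl : resource -> nat -> rat;
  cf : resource -> nat -> rat;
  Af_ne : forall p, Af p != set0;
  Al_ne : Al != set0;
  cl0 : forall i, cl i 0%N = 0;
  cf0 : forall i, cf i 0%N = 0 }.

Arguments Af : clear implicits.
Arguments Al : clear implicits.
Arguments cl : clear implicits.
Arguments cf : clear implicits.

Definition symmetric_game (G : sscg) : Prop :=
  Al G = setT /\ forall p, Af G p = setT.

Section Strategies.
Variables (K : realFieldType) (G : sscg).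

Definition leader_strategy (s : resource G -> K) : Prop :=
  (forall i, 0 <= s i) /\ (forall i, i \notin Al G -> s i = 0) /\
  \sum_(i : resource G) s i = 1.

Definition profile (a : follower G -> resource G) : Prop :=
  forall p, a p \in Af G p.

Definition nu (a : follower G -> resource G) (i : resource G) : nat :=
  #|[set p | a p == i]|.

Definition cfs (s : resource G -> K) (i : resource G) (x : nat) : K :=
  s i * ratr (cf G i x.+1) + (1 - s i) * ratr (cf G i x).

Definition leader_cost (s : resource G -> K) (a : follower G -> resource G) : K :=
  \sum_(i in Al G) s i * ratr (cl G i (nu a i).+1).

Definition is_NE (s : resource G -> K) (a : follower G -> resource G) : Prop :=
  profile a /\
  forall p (i : resource G), i \in Af G p -> i != a p ->
    cfs s (a p) (nu a (a p)) <= cfs s i (nu a i).+1.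

Definition worst_value (s : resource G -> K) (v : K) : Prop :=
  (exists a, is_NE s a /\ leader_cost s a = v) /\
  (forall a, is_NE s a -> leader_cost s a <= v).

Definition is_PSE (s : resource G -> K) (a : follower G -> resource G) : Prop :=
  leader_strategy s /\ worst_value s (leader_cost s a) /\
  forall s' v', leader_strategy s' -> worst_value s' v' -> leader_cost s a <= v'.

Definition has_PSE : Prop := exists s a, is_PSE s a.

End Strategies.

(* The example game: one follower, R = {r1, r2} = 'I_2 (r1 = 0, r2 = 1). *)
Definition ex_cl (i : 'I_2) (x : nat) : rat :=
  if val i == 0%N then (if x == 1%N then 2%:R else 0)
  else (if (x == 1%N) || (x == 2%N) then 2%:R else 0).

Definition ex_cf (i : 'I_2) (x : nat) : rat :=
  if x == 1%N then 1 else if x == 2%N then 2%:R else 0.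

Lemma ex_Af_ne (p : 'I_1) : [set: 'I_2] != set0.
Proof. by apply/set0Pn; exists ord0. Qed.
Lemma ex_Al_ne : [set: 'I_2] != set0.
Proof. by apply/set0Pn; exists ord0. Qed.
Lemma ex_cl0 i : ex_cl i 0%N = 0.
Proof. by rewrite /ex_cl; case: ifP. Qed.
Lemma ex_cf0 i : ex_cf i 0%N = 0.
Proof. by []. Qed.

Definition example_game : sscg :=
  @SSCG 'I_1 'I_2 (fun _ => setT) setT ex_cl ex_cf ex_Af_ne ex_Al_ne ex_cl0 ex_cf0.

(* With one follower, the follower's expected cost of a resource is 1 plus the
   probability the leader puts on it, so in equilibrium the follower takes a
   resource of minimal probability.  The leader pays 2 * s(r2) when the follower
   sits on r1 and 2 when it sits on r2.  If s(r2) <= s(r1), the pessimistic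
   follower can take r2 and the leader pays 2; otherwise s(r2) > 1/2 and every
   equilibrium costs at least 2 * s(r2) > 1.  Letting s(r2) decrease to 1/2 the
   pessimistic value tends to 1, which is therefore never attained. *)
From HB Require Import structures.
From mathcomp Require Import all_boot all_order all_algebra.
From mathcomp Require Import lra.
Import Order.TTheory GRing.Theory Num.Theory.
Local Open Scope ring_scope.

Lemma no_PSE_of_unattained_inf (K : realFieldType) (G : sscg) (m : K) :
  (forall s v, leader_strategy (G := G) s -> worst_value (G := G) s v -> m < v) ->
  (forall eps : K, 0 < eps -> exists s v,
     leader_strategy (G := G) s /\ worst_value (G := G) s v /\ v < m + eps) ->
  ~ has_PSE K G.
Proof.
move=> gt_m inf_m [s [a [sP [sW s_opt]]]].
have m_lt := gt_m _ _ sP sW.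
have [s' [v' [s'P [s'W v'_lt]]]] := inf_m (leader_cost s a - m) ltac:(lra).
have := s_opt _ _ s'P s'W; lra.
Qed.

Section ExampleGame.
Context {K : realFieldType}.
Local Notation G := example_game.
Local Notation r1 := (ord0 : 'I_2).
Local Notation r2 := (ord_max : 'I_2).

Lemma I2_cases (i : 'I_2) : i = r1 \/ i = r2.
Proof. by case: i => [[|[|k]] ik] //; [left|right]; apply: val_inj. Qed.

Lemma sum_I2 (s : 'I_2 -> K) : \sum_i s i = s r1 + s r2.
Proof. by rewrite big_ord_recl big_ord1; congr (_ + s _); apply/val_inj. Qed.

Lemma example_nu (a : 'I_1 -> 'I_2) i : nu (G := G) a i = (a ord0 == i).
Proof.
rewrite /nu (_ : [set p | a p == i] = if a ord0 == i then setT else set0).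
  by case: ifP; rewrite ?cardsT ?card_ord ?cards0.
by apply/setP => p; rewrite (ord1 p); case: ifP; rewrite !inE.
Qed.

Lemma example_cfs1 (s : 'I_2 -> K) i : cfs (G := G) s i 1 = 1 + s i.
Proof. by rewrite /cfs /= /ex_cf /= ratr_nat rmorph1; lra. Qed.

Lemma example_leader_cost (s : 'I_2 -> K) (a : 'I_1 -> 'I_2) :
  leader_cost (G := G) s a =
    if a ord0 == r1 then 2 * s r2 else 2 * (s r1 + s r2).
Proof.
rewrite /leader_cost (eq_bigl xpredT) => [|i]; last by rewrite inE.
rewrite sum_I2 !example_nu /= /ex_cl /=.
by case: (I2_cases (a ord0)) => ->; rewrite /= ?rmorph0 !ratr_nat; lra.
Qed.

Lemma example_NEP (s : 'I_2 -> K) (a : 'I_1 -> 'I_2) :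
  is_NE (G := G) s a <-> forall j, s (a ord0) <= s j.
Proof.
split.
- case=> _ NE j; have [->//|j_ne] := eqVneq j (a ord0).
  have := NE ord0 j (in_setT j) j_ne.
  by rewrite !example_nu eqxx eq_sym (negbTE j_ne) !example_cfs1 lerD2l.
- move=> a_min; split=> [p|p j _ j_ne]; first by rewrite inE.
  by rewrite (ord1 p) in j_ne *; rewrite !example_nu eqxx eq_sym (negbTE j_ne)
    !example_cfs1 lerD2l.
Qed.

Lemma example_strategy_probs (s : 'I_2 -> K) : leader_strategy (G := G) s ->
  [/\ 0 <= s r1, 0 <= s r2 & s r1 + s r2 = 1].
Proof. by case=> s_ge0 [_]; rewrite sum_I2. Qed.

Lemma example_worst_value_gt1 (s : 'I_2 -> K) v :
  leader_strategy (G := G) s -> worst_value (G := G) s v -> 1 < v.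
Proof.
move=> /example_strategy_probs [s1_ge0 s2_ge0 s_sum] [[a [_ <-]] worst].
have [s21|s12] := lerP (s r2) (s r1).
  have r2_NE : is_NE (G := G) s (fun _ => r2).
    by apply/example_NEP => j; case: (I2_cases j) => ->.
  have := worst _ r2_NE; rewrite !example_leader_cost /=.
  by case: ifP => _; lra.
by rewrite example_leader_cost; case: ifP => _; lra.
Qed.

Definition mix (q : K) (i : 'I_2) : K := if i == r1 then 1 - q else q.

Lemma mix_strategy q : 0 <= q <= 1 -> leader_strategy (G := G) (mix q).
Proof.
move=> /andP [q_ge0 q_le1]; split; last split.
- by move=> i; rewrite /mix; case: ifP => _; lra.
- by move=> i; rewrite inE.
- by rewrite sum_I2 /mix /=; lra.
Qed.

Lemma mix_worst_value q : 1 - q < q -> worst_value (G := G) (mix q) (2 * q).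
Proof.
move=> q_gt; split.
- exists (fun _ => r1); split; last by rewrite example_leader_cost.
  by apply/example_NEP => j; case: (I2_cases j) => ->; rewrite /mix /=; lra.
- move=> a /example_NEP /(_ r1); rewrite example_leader_cost /mix.
  by case: (I2_cases (a ord0)) => -> /=; lra.
Qed.

(* The worst value 2 q of [mix q] approaches 1 as q decreases to 1/2. *)
Lemma example_inf_approx (eps : K) : 0 < eps -> exists s v,
  leader_strategy (G := G) s /\ worst_value (G := G) s v /\ v < 1 + eps.
Proof.
move=> eps_gt0; pose d := Num.min eps 1.
have d_gt0 : 0 < d by rewrite lt_min eps_gt0 ltr01.
have [d_le_eps d_le1] : d <= eps /\ d <= 1 by rewrite !ge_min !lexx orbT.
exists (mix ((2 + d) / 4)), (2 * ((2 + d) / 4)); split; last split.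
- by apply: mix_strategy; apply/andP; split; lra.
- by apply: mix_worst_value; lra.
- lra.
Qed.

End ExampleGame.

Theorem mainTheorem1 (K : realFieldType) :
  (exists G : sscg, symmetric_game G /\ ~ has_PSE K G) /\
  (symmetric_game example_game /\
   (forall s v, leader_strategy s -> worst_value (K := K) (G := example_game) s v -> 1 <= v) /\
   (forall eps : K, 0 < eps -> exists s v, leader_strategy s /\
        worst_value (G := example_game) s v /\ v < 1 + eps) /\
   (forall s, leader_strategy s -> ~ worst_value (K := K) (G := example_game) s 1) /\
   ~ has_PSE K example_game).
Proof.
have sym : symmetric_game example_game by [].
have noPSE : ~ has_PSE K example_game.
  apply: (@no_PSE_of_unattained_inf K _ 1).
  - exact: example_worst_value_gt1.
  - exact: example_inf_approx.
split; first by exists example_game.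
do 2!split => //.
- by move=> s v sP sW; have := example_worst_value_gt1 _ _ sP sW; lra.
- split; first exact: example_inf_approx.
  split=> // s sP sW; have := example_worst_value_gt1 _ _ sP sW; lra.
Qed.
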